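(* There is an absolute constant $c_0>0$ such that if $\kappa\le c_0$ and $\sqrt\Gamma\le c_0\kappa$ then the following holds. Let $\mathbb K=\{0,1\}^3$ and let $\boldsymbol\theta=(\theta_{\boldsymbol r})_{\boldsymbol r\in\mathbb K}$ be angles such that $|S^{(\alpha)}_{\boldsymbol r}-S^{(\alpha)}_{\boldsymbol r+\hat{\mathrm e}_\alpha}|<\Gamma$ for every nearest-neighbour pair $\boldsymbol r,\boldsymbol r+\hat{\mathrm e}_\alpha$ in $\mathbb K$, but such that it is not the case that all spins are within angle $\kappa$ of one single $\hat{\mathrm w}_\tau$. Let $\boldsymbol r\in\mathbb K$. Then exactly one of the following holds: (1) $|\theta_{\boldsymbol r'}-\theta_{\boldsymbol r}|<4\Gamma/\kappa$ for all $\boldsymbol r'\in\mathbb K$; (2) there exists $\alpha\in\{1,2,3\}$ such that $|\theta_{\boldsymbol r'}-\theta_{\boldsymbol r}|<4\Gamma/\kappa$ for all $\boldsymbol r'\in\mathbb K$ with $\boldsymbol r-\boldsymbol r'\perp\hat{\mathrm e}_\alpha$, while for the remaining $\boldsymbol r'\in\mathbb K$, $|\theta_{\boldsymbol r'}-\tilde\theta_{\boldsymbol r}|<4\Gamma/\kappa$, where $\tilde\theta_{\boldsymbol r}=2\phi_\alpha-\theta_{\boldsymbol r}$ is the reflection of $\theta_{\boldsymbol r}$ through the $\alpha$-th of $\hat{\mathrm a},\hat{\mathrm b},\hat{\mathrm c}$. (Angular differences mod $2\pi$.)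
   Context: $\boldsymbol S_{\boldsymbol r}=(\cos\theta_{\boldsymbol r},\sin\theta_{\boldsymbol r})$; $\hat{\mathrm a},\hat{\mathrm b},\hat{\mathrm c}$ are unit vectors at angles $\phi_1=0,\phi_2=\tfrac{2\pi}3,\phi_3=-\tfrac{2\pi}3$, $S^{(\alpha)}_{\boldsymbol r}=\cos(\theta_{\boldsymbol r}-\phi_\alpha)$; $\hat{\mathrm w}_\tau=(\cos\frac{\pi\tau}3,\sin\frac{\pi\tau}3)$, $\tau=1,\dots,6$. *)

From Stdlib Require Import Reals ZArith.
Open Scope R_scope.

Definition site : Type := (bool * bool * bool)%type.

Inductive dir : Type := A1 | A2 | A3.

(* alpha-th coordinate of a site (false = 0, true = 1). *)
Definition coord (a : dir) (r : site) : bool :=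
  match a, r with
  | A1, (x, _, _) => x
  | A2, (_, y, _) => y
  | A3, (_, _, z) => z
  end.

(* r + e_alpha (used only when coord a r = false), i.e. flip the alpha-th bit. *)
Definition flip (a : dir) (r : site) : site :=
  match a, r with
  | A1, (x, y, z) => (negb x, y, z)
  | A2, (x, y, z) => (x, negb y, z)
  | A3, (x, y, z) => (x, y, negb z)
  end.

(* phi_1 = 0, phi_2 = 2pi/3, phi_3 = -2pi/3 : angles of a, b, c. *)
Definition phi (a : dir) : R :=
  match a with
  | A1 => 0
  | A2 => 2 * PI / 3
  | A3 => - (2 * PI / 3)
  end.

(* S^(alpha) for a spin at angle th: cos(th - phi_alpha). *)
Definition Scomp (a : dir) (th : R) : R := cos (th - phi a).

(* Angle of w_tau = (cos(pi tau/3), sin(pi tau/3)). *)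
Definition w_angle (tau : nat) : R := PI * INR tau / 3.

Definition ang_close (x y e : R) : Prop :=
  exists k : Z, Rabs (x - y - 2 * PI * IZR k) < e.

(* Write [Gamma = g^2].  The edge condition [|cos (u - phi) - cos (v - phi)| < g^2] forces [v]
   to be close, modulo [2 pi], to [u] or to its reflection [2 phi - u] through the axis of the
   edge: within [O(g)] in general and within [O(g^2 / s)] when [|sin (u - phi)| >= s].  These
   reflections generate a dihedral group [D3], so composing edge labels along paths from [r]
   makes every spin close to [h x (theta r)] for some [h x] in [D3].  Comparing paths, the
   labels are consistent along every edge up to the approximate stabilizer of [theta r], which is
   trivial when [theta r] is far from all axes and [{1, reflection}] when it is near one of them;
   a finite check over the cube then shows that the labelling is trivial or the reflection
   pattern of a single direction (the remaining case would put all spins near one [w_tau]).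
   Knowing the labels, each edge whose spins are far from its axis obeys the sharp [O(g^2/kappa)]
   estimate, the other edges are bypassed by three sharp ones, and summing along paths gives
   [4 Gamma / kappa].  The alternatives are exclusive because both together would put [theta r]
   near its own reflection, hence near an axis, hence all spins near one [w_tau]. *)

From Stdlib Require Import Reals Lra Lia Psatz ZArith List Bool IndefiniteDescription.
Import ListNotations.
Open Scope R_scope.

(** * Trigonometric estimates *)

Lemma Rabs_le_1 y : -1 <= y <= 1 -> Rabs y <= 1.
Proof. intros. unfold Rabs; destruct Rcase_abs; lra. Qed.

Lemma sin_ge_cubic a : 0 <= a -> a <= PI -> a - a ^ 3 / 6 <= sin a.
Proof.
  intros Ha0 Ha1. destruct (sin_bound a 0 Ha0 Ha1) as [H _].
  unfold sin_approx, sin_term in H. simpl in H. lra.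
Qed.

Lemma Rabs_sin_le x : Rabs (sin x) <= Rabs x.
Proof.
  assert (Hpos : forall y, 0 <= y -> Rabs (sin y) <= y).
  { intros y Hy. destruct (Req_dec y 0) as [->|Hy0]; [rewrite sin_0, Rabs_R0; lra|].
    pose proof (sin_lt_x y ltac:(lra)). pose proof (SIN_bound y). pose proof PI2_3_2.
    destruct (Rle_lt_dec y PI).
    - rewrite Rabs_right; [lra|]. apply Rle_ge, sin_ge_0; lra.
    - unfold Rabs; destruct Rcase_abs; lra. }
  destruct (Rle_lt_dec 0 x).
  - rewrite (Rabs_right x) by lra. auto.
  - rewrite (Rabs_left x), <- Rabs_Ropp, <- sin_neg by lra. apply Hpos; lra.
Qed.

Lemma Rabs_sin_add_INR_PI (n : nat) x : Rabs (sin (x + INR n * PI)) = Rabs (sin x).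
Proof.
  induction n as [|n IH].
  - simpl. rewrite Rmult_0_l, Rplus_0_r. reflexivity.
  - rewrite S_INR. replace (x + (INR n + 1) * PI) with ((x + INR n * PI) + PI) by ring.
    rewrite neg_sin, Rabs_Ropp. exact IH.
Qed.

Lemma Rabs_sin_add_IZR_PI (k : Z) x : Rabs (sin (x + IZR k * PI)) = Rabs (sin x).
Proof.
  destruct k as [|p|p].
  - simpl. rewrite Rmult_0_l, Rplus_0_r. reflexivity.
  - rewrite <- positive_nat_Z, <- INR_IZR_INZ. apply Rabs_sin_add_INR_PI.
  - rewrite <- (Rabs_sin_add_INR_PI (Pos.to_nat p) (x + IZR (Z.neg p) * PI)).
    rewrite INR_IZR_INZ, positive_nat_Z, <- Pos2Z.opp_pos, opp_IZR.
    f_equal. f_equal. ring.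
Qed.

Lemma Rabs_sin_eq_shift a b (k : Z) : a = b + IZR k * PI -> Rabs (sin a) = Rabs (sin b).
Proof. intros ->. apply Rabs_sin_add_IZR_PI. Qed.

Lemma Rabs_sin_eq_opp_shift a b (k : Z) : a = - b + IZR k * PI -> Rabs (sin a) = Rabs (sin b).
Proof. intros ->. rewrite Rabs_sin_add_IZR_PI, sin_neg, Rabs_Ropp. reflexivity. Qed.

Lemma sin_Lipschitz x y : Rabs (sin x - sin y) <= Rabs (x - y).
Proof.
  rewrite form4, !Rabs_mult, (Rabs_right 2) by lra.
  pose proof (Rabs_sin_le ((x - y) / 2)) as Hs.
  replace (Rabs ((x - y) / 2)) with (Rabs (x - y) / 2) in Hs
    by (unfold Rdiv; rewrite Rabs_mult, (Rabs_right (/ 2)) by lra; reflexivity).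
  pose proof (Rabs_le_1 _ (COS_bound ((x + y) / 2))).
  pose proof (Rabs_pos (sin ((x - y) / 2))). pose proof (Rabs_pos (cos ((x + y) / 2))).
  nra.
Qed.

(* The constant [102/100] absorbs the cubic term of [sin_ge_cubic] for [t <= 1/10]. *)
Lemma Rabs_sin_small_near_kPI x t : 0 < t -> t <= 1/10 -> Rabs (sin x) < t ->
  exists k : Z, Rabs (x - IZR k * PI) < 102/100 * t.
Proof.
  intros Ht0 Ht1 Hs.
  pose proof PI_RGT_0. pose proof PI2_3_2.
  set (z := x / PI + 1/2). destruct (archimed z) as [Hz1 Hz2].
  exists (up z - 1)%Z. rewrite minus_IZR. simpl (IZR 1).
  set (y := x - (IZR (up z) - 1) * PI).
  assert (Hy : - (PI / 2) <= y < PI / 2).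
  { assert (x = PI * (z - 1/2)) as Ex by (unfold z; field; lra).
    unfold y. rewrite Ex. split; nra. }
  assert (Hsy : Rabs (sin y) < t).
  { rewrite (Rabs_sin_eq_shift y x (1 - up z)); [exact Hs|].
    unfold y. rewrite minus_IZR. simpl (IZR 1). ring. }
  assert (Hw : forall w, 0 <= w <= PI / 2 -> Rabs (sin w) < t -> w < 102/100 * t).
  { intros w Hw HsW. pose proof (sin_ge_cubic w ltac:(lra) ltac:(lra)) as Hcub.
    rewrite Rabs_right in HsW by (apply Rle_ge, sin_ge_0; lra).
    pose proof PI_4. simpl in Hcub. rewrite Rmult_1_r in Hcub.
    assert (w * (w * w) <= w * 4) by (apply Rmult_le_compat_l; nra).
    assert (w < 3 * t) by lra. assert (w * w <= 9/100) by nra.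
    assert (w * (w * w) <= w * (9/100)) by (apply Rmult_le_compat_l; lra). lra. }
  unfold Rabs at 1. destruct (Rcase_abs y).
  - apply Hw; [lra|]. rewrite sin_neg, Rabs_Ropp. exact Hsy.
  - apply Hw; [lra|exact Hsy].
Qed.

Lemma ang_close_sym x y e : ang_close x y e -> ang_close y x e.
Proof.
  intros [k Hk]. exists (- k)%Z. rewrite opp_IZR, <- Rabs_Ropp.
  replace (- (y - x - 2 * PI * - IZR k)) with (x - y - 2 * PI * IZR k) by ring. exact Hk.
Qed.

Lemma ang_close_trans x y z e1 e2 :
  ang_close x y e1 -> ang_close y z e2 -> ang_close x z (e1 + e2).
Proof.
  intros [k1 H1] [k2 H2]. exists (k1 + k2)%Z. rewrite plus_IZR.
  replace (x - z - 2 * PI * (IZR k1 + IZR k2))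
    with ((x - y - 2 * PI * IZR k1) + (y - z - 2 * PI * IZR k2)) by ring.
  eapply Rle_lt_trans; [apply Rabs_triang|lra].
Qed.

Lemma ang_close_weaken x y e e' : e <= e' -> ang_close x y e -> ang_close x y e'.
Proof. intros He [k Hk]. exists k. lra. Qed.

Lemma ang_close_refl x e : 0 < e -> ang_close x x e.
Proof.
  intros He. exists 0%Z. replace (x - x - 2 * PI * IZR 0) with 0 by (simpl; ring).
  rewrite Rabs_R0. exact He.
Qed.

Lemma ang_close_shift_r x y y' e n :
  y' = y + 2 * PI * IZR n -> ang_close x y e -> ang_close x y' e.
Proof.
  intros -> [k Hk]. exists (k - n)%Z. rewrite minus_IZR.
  replace (x - (y + 2 * PI * IZR n) - 2 * PI * (IZR k - IZR n))
    with (x - y - 2 * PI * IZR k) by ring. exact Hk.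
Qed.

Lemma ang_close_shift_l x x' y e n :
  x' = x + 2 * PI * IZR n -> ang_close x y e -> ang_close x' y e.
Proof.
  intros Hx H. apply ang_close_sym, (ang_close_shift_r _ x _ _ n); [exact Hx|].
  now apply ang_close_sym.
Qed.

Lemma ang_close_sub_same a b c e : ang_close (a - c) (b - c) e -> ang_close a b e.
Proof.
  intros [k Hk]. exists k.
  replace (a - b - 2 * PI * IZR k) with (a - c - (b - c) - 2 * PI * IZR k) by ring. exact Hk.
Qed.

Lemma ang_close_opp x y e : ang_close x y e -> ang_close (- x) (- y) e.
Proof.
  intros [k Hk]. exists (- k)%Z. rewrite opp_IZR, <- Rabs_Ropp.
  replace (- (- x - - y - 2 * PI * - IZR k)) with (x - y - 2 * PI * IZR k) by ring. exact Hk.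
Qed.

Lemma ang_close_add_r x y c e : ang_close x y e -> ang_close (x + c) (y + c) e.
Proof.
  intros [k Hk]. exists k.
  replace (x + c - (y + c) - 2 * PI * IZR k) with (x - y - 2 * PI * IZR k) by ring. exact Hk.
Qed.

(** * The dihedral group generated by the reflections through the axes *)

(* [Rot k] is [x |-> x + 2 k pi / 3] and [Ref k] is [x |-> - x + 2 k pi / 3], the reflection
   through the line at angle [k pi / 3]; all identities hold modulo [2 pi]. *)
Inductive D3 : Type := Rot0 | Rot1 | Rot2 | Ref0 | Ref1 | Ref2.

Definition is_refl (g : D3) : bool :=
  match g with Rot0 | Rot1 | Rot2 => false | _ => true end.

Definition shift (g : D3) : nat :=
  match g with Rot0 | Ref0 => 0 | Rot1 | Ref1 => 1 | _ => 2 end.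

Definition d3 (b : bool) (n : nat) : D3 :=
  match b, Nat.modulo n 3 with
  | false, 0 => Rot0 | false, 1 => Rot1 | false, _ => Rot2
  | true, 0 => Ref0 | true, 1 => Ref1 | true, _ => Ref2
  end.

Definition d3_mul (g h : D3) : D3 :=
  d3 (xorb (is_refl g) (is_refl h)) ((if is_refl g then 3 - shift h else shift h) + shift g).

Definition d3_inv (g : D3) : D3 := match g with Rot1 => Rot2 | Rot2 => Rot1 | x => x end.

Definition act (g : D3) (x : R) : R :=
  (if is_refl g then - x else x) + INR (shift g) * (2 * PI / 3).

Definition d3_eqb (g h : D3) : bool :=
  match g, h with
  | Rot0, Rot0 | Rot1, Rot1 | Rot2, Rot2 | Ref0, Ref0 | Ref1, Ref1 | Ref2, Ref2 => true
  | _, _ => false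
  end.

Lemma d3_eqb_eq g h : d3_eqb g h = true <-> g = h.
Proof. destruct g, h; simpl; split; congruence. Qed.

Lemma d3_mulVg g : d3_mul (d3_inv g) g = Rot0.
Proof. destruct g; reflexivity. Qed.

Lemma d3_mul1g g : d3_mul Rot0 g = g.
Proof. destruct g; reflexivity. Qed.

Lemma d3_invg_mul_eq1 g h : d3_mul (d3_inv g) h = Rot0 -> h = g.
Proof. destruct g, h; cbv; congruence. Qed.

Lemma act_Rot0 x : act Rot0 x = x.
Proof. unfold act; simpl; ring. Qed.

Lemma act_mul g h x : exists n : Z, act g (act h x) = act (d3_mul g h) x + 2 * PI * IZR n.
Proof.
  destruct g, h; unfold act, d3_mul; simpl;
  first [ exists 0%Z; simpl; lra | exists 1%Z; simpl; lra | exists (-1)%Z; simpl; lra ].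
Qed.

Lemma ang_close_act x y g e : ang_close x y e -> ang_close (act g x) (act g y) e.
Proof.
  intros H. unfold act. apply ang_close_add_r.
  destruct (is_refl g); [apply ang_close_opp|]; exact H.
Qed.

Lemma ang_close_act_cancel g1 g2 x e : ang_close (act g1 x) (act g2 x) e ->
  ang_close (act (d3_mul (d3_inv g2) g1) x) x e.
Proof.
  intros H. apply (ang_close_act _ _ (d3_inv g2)) in H.
  destruct (act_mul (d3_inv g2) g1 x) as [n1 H1]. destruct (act_mul (d3_inv g2) g2 x) as [n2 H2].
  rewrite H1, H2, d3_mulVg, act_Rot0 in H.
  eapply ang_close_shift_l with (n := (- n1)%Z); [|eapply ang_close_shift_r with (n := (- n2)%Z); [|exact H]];
    rewrite opp_IZR; ring.
Qed.

Definition ang_close_by (x : R) (g : D3) (y : R) (e : R) : Prop := ang_close x (act g y) e.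

Lemma ang_close_by_trans x y z g h e1 e2 :
  ang_close_by x g y e1 -> ang_close_by y h z e2 -> ang_close_by x (d3_mul g h) z (e1 + e2).
Proof.
  unfold ang_close_by. intros H1 H2. apply (ang_close_act _ _ g) in H2.
  destruct (act_mul g h z) as [n Hn]. rewrite Hn in H2.
  eapply ang_close_shift_r with (n := (- n)%Z); [|exact (ang_close_trans _ _ _ _ _ H1 H2)].
  rewrite opp_IZR. ring.
Qed.

Lemma ang_close_by_weaken x g y e e' : e <= e' -> ang_close_by x g y e -> ang_close_by x g y e'.
Proof. apply ang_close_weaken. Qed.

Lemma ang_close_by_refl x e : 0 < e -> ang_close_by x Rot0 x e.
Proof. intros He. unfold ang_close_by. rewrite act_Rot0. now apply ang_close_refl. Qed.

(* How far [x] is from the line at angle [j pi / 3], the axis of [Ref j]. *)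
Definition axis_dist (x : R) (j : nat) : R := Rabs (sin (x - INR j * PI / 3)).

Definition axis_perm (g : D3) (j : nat) : nat :=
  Nat.modulo (if is_refl g then 3 - Nat.modulo (j + shift g) 3 else j + shift g) 3.

Lemma axis_perm_lt g j : (axis_perm g j < 3)%nat.
Proof. unfold axis_perm. apply Nat.mod_upper_bound. lia. Qed.

Lemma shift_lt g : (shift g < 3)%nat.
Proof. destruct g; simpl; lia. Qed.

Local Ltac sin_shift :=
  first [ apply (Rabs_sin_eq_shift _ _ 0%Z); simpl; lra
        | apply (Rabs_sin_eq_shift _ _ 1%Z); simpl; lra
        | apply (Rabs_sin_eq_shift _ _ (-1)%Z); simpl; lra
        | apply (Rabs_sin_eq_shift _ _ 2%Z); simpl; lra
        | apply (Rabs_sin_eq_shift _ _ (-2)%Z); simpl; lra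
        | apply (Rabs_sin_eq_opp_shift _ _ 0%Z); simpl; lra
        | apply (Rabs_sin_eq_opp_shift _ _ 1%Z); simpl; lra
        | apply (Rabs_sin_eq_opp_shift _ _ (-1)%Z); simpl; lra
        | apply (Rabs_sin_eq_opp_shift _ _ 2%Z); simpl; lra
        | apply (Rabs_sin_eq_opp_shift _ _ (-2)%Z); simpl; lra ].

Lemma axis_dist_act g x j : (j < 3)%nat -> axis_dist (act g x) j = axis_dist x (axis_perm g j).
Proof.
  intros Hj. unfold axis_dist, act, axis_perm.
  destruct j as [|[|[|j]]]; [| | | lia]; destruct g; simpl; sin_shift.
Qed.

Lemma axis_dist_Lipschitz x y j e : ang_close x y e -> axis_dist x j <= axis_dist y j + e.
Proof.
  intros [k Hk]. unfold axis_dist.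
  set (u := y - INR j * PI / 3). set (v := x - y - 2 * PI * IZR k) in *.
  rewrite (Rabs_sin_eq_shift _ (u + v) (2 * k)) by (unfold u, v; rewrite mult_IZR; simpl; ring).
  pose proof (sin_Lipschitz (u + v) u).
  replace (u + v - u) with v in H by ring.
  pose proof (Rabs_triang_inv (sin (u + v)) (sin u)). lra.
Qed.

Lemma act_fixed_classify g x e : ang_close (act g x) x e -> e <= 1 ->
  g = Rot0 \/ (is_refl g = true /\ axis_dist x (shift g) < e / 2).
Proof.
  intros [k Hk] He. assert (3 < PI) by (pose proof PI2_3_2; lra).
  assert (Hk' : IZR k <= 0 \/ 1 <= IZR k).
  { destruct (Z.le_gt_cases k 0); [left; apply IZR_le; lia|right; apply IZR_le; lia]. }
  unfold act in Hk. destruct g; simpl in Hk.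
  1: now left.
  1, 2: exfalso; revert Hk; unfold Rabs; destruct Rcase_abs; intros; destruct Hk'; nra.
  all: right; split; [reflexivity|]; unfold axis_dist; simpl shift;
    rewrite <- (Rabs_sin_add_IZR_PI k); eapply Rle_lt_trans; [apply Rabs_sin_le|];
    revert Hk; unfold Rabs; destruct Rcase_abs; destruct Rcase_abs; intros; simpl in *; lra.
Qed.

(** * Inverting [cos u ~ cos v] *)

Lemma Rabs_cos_sub u v :
  Rabs (cos u - cos v) = 2 * (Rabs (sin ((u - v) / 2)) * Rabs (sin ((u + v) / 2))).
Proof. rewrite form2, !Rabs_mult, (Rabs_left (-2)) by lra. ring. Qed.

Lemma ang_close_of_half_sub u v k e :
  Rabs ((u - v) / 2 - IZR k * PI) < e / 2 -> ang_close v u e.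
Proof.
  intros H. exists (- k)%Z. rewrite opp_IZR.
  replace (v - u - 2 * PI * - IZR k) with (-2 * ((u - v) / 2 - IZR k * PI)) by field.
  rewrite Rabs_mult, Rabs_left by lra. lra.
Qed.

Lemma ang_close_opp_of_half_add u v k e :
  Rabs ((u + v) / 2 - IZR k * PI) < e / 2 -> ang_close v (- u) e.
Proof.
  intros H. exists k.
  replace (v - - u - 2 * PI * IZR k) with (2 * ((u + v) / 2 - IZR k * PI)) by field.
  rewrite Rabs_mult, Rabs_right by lra. lra.
Qed.

(* One factor of [Rabs_cos_sub] is below [71/100 g] since their product is below [g^2 / 2]. *)
Lemma cos_close_loose u v g : 0 < g -> g <= 1/100 -> Rabs (cos u - cos v) < g * g ->
  ang_close v u (3/2 * g) \/ ang_close v (- u) (3/2 * g).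
Proof.
  intros Hg0 Hg1 H. rewrite Rabs_cos_sub in H.
  set (a := Rabs (sin ((u - v) / 2))) in *. set (b := Rabs (sin ((u + v) / 2))) in *.
  assert (0 <= a) by apply Rabs_pos. assert (0 <= b) by apply Rabs_pos.
  assert (a < 71/100 * g \/ b < 71/100 * g) as [Ha|Hb].
  { destruct (Rlt_dec a (71/100 * g)); [now left|].
    destruct (Rlt_dec b (71/100 * g)); [now right|]. nra. }
  - destruct (Rabs_sin_small_near_kPI ((u - v) / 2) (71/100 * g) ltac:(lra) ltac:(lra) Ha)
      as [k Hk].
    left. apply (ang_close_of_half_sub _ _ k). lra.
  - destruct (Rabs_sin_small_near_kPI ((u + v) / 2) (71/100 * g) ltac:(lra) ltac:(lra) Hb)
      as [k Hk].
    right. apply (ang_close_opp_of_half_add _ _ k). lra.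
Qed.

Lemma Rabs_cos_ge x : 1 - Rabs (sin x) <= Rabs (cos x).
Proof.
  pose proof (sin2_cos2 x). pose proof (SIN_bound x). pose proof (COS_bound x).
  unfold Rsqr in H. unfold Rabs; destruct Rcase_abs; destruct Rcase_abs; nra.
Qed.

Lemma Rabs_sin_sub_ge x y :
  Rabs (sin x) * (1 - Rabs (sin y)) - Rabs (sin y) <= Rabs (sin (x - y)).
Proof.
  rewrite sin_minus. pose proof (Rabs_cos_ge y).
  pose proof (Rabs_le_1 _ (COS_bound x)). pose proof (Rabs_le_1 _ (COS_bound y)).
  pose proof (Rabs_triang_inv (sin x * cos y) (cos x * sin y)) as Htr.
  rewrite !Rabs_mult in Htr.
  pose proof (Rabs_pos (sin x)). pose proof (Rabs_pos (sin y)).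
  assert (Rabs (cos x) * Rabs (sin y) <= Rabs (sin y)) by nra.
  assert (Rabs (sin x) * (1 - Rabs (sin y)) <= Rabs (sin x) * Rabs (cos y)) by nra.
  lra.
Qed.

(* When [Rabs (sin u) >= s], the small factor of [Rabs_cos_sub] forces the other one to be
   about [s], so the small one is below [g^2 / (2 s)] (up to a factor [1.996]). *)
Lemma cos_close_tight u v g s : 0 < g -> 790 * g <= s -> s <= Rabs (sin u) ->
  Rabs (cos u - cos v) < g * g ->
  ang_close v u (103/100 * (g * g) / s) \/ ang_close v (- u) (103/100 * (g * g) / s).
Proof.
  intros Hg0 Hgs Hsu H. rewrite Rabs_cos_sub in H.
  assert (Hs1 : s <= 1) by (pose proof (Rabs_le_1 _ (SIN_bound u)); lra).
  set (A := (u - v) / 2) in *. set (B := (u + v) / 2) in *.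
  set (a := Rabs (sin A)) in *. set (b := Rabs (sin B)) in *.
  assert (0 <= a) by apply Rabs_pos. assert (0 <= b) by apply Rabs_pos.
  set (t := g * g / (1996/1000 * s)).
  assert (Ht : t * (1996/1000 * s) = g * g) by (unfold t; field; lra).
  assert (Ht0 : 0 < t) by (unfold t; apply Rdiv_lt_0_compat; nra).
  assert (Ht1 : t <= 1/10) by nra.
  assert (Hts : 102/100 * t < 103/100 * (g * g) / s / 2).
  { replace (103/100 * (g * g) / s / 2) with (t * (1996/1000 * 103/200)) by (unfold t; field; lra).
    lra. }
  assert (Hsmall : forall p q, 0 <= p -> p < 71/100 * g -> s - 2 * p <= q -> 2 * (p * q) < g * g ->
    p < t).
  { intros p q Hp Hp1 Hpq Hpq'. assert (p * (1996/1000 * s) < g * g) by nra.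
    apply (Rmult_lt_reg_r (1996/1000 * s)); nra. }
  assert (HAB : forall w, s - 2 * Rabs (sin w) <= Rabs (sin (u - w))).
  { intros w. pose proof (Rabs_sin_sub_ge u w). pose proof (Rabs_pos (sin w)).
    assert (Rabs (sin u) * (1 - Rabs (sin w)) >= s * (1 - Rabs (sin w))).
    { apply Rle_ge, Rmult_le_compat_r; [|lra]. pose proof (Rabs_le_1 _ (SIN_bound w)); lra. }
    nra. }
  assert (a < 71/100 * g \/ b < 71/100 * g) as [Ha|Hb].
  { destruct (Rlt_dec a (71/100 * g)); [now left|].
    destruct (Rlt_dec b (71/100 * g)); [now right|]. nra. }
  - assert (Hb : s - 2 * a <= b) by (unfold b; replace B with (u - A) by (unfold A, B; field); apply HAB).
    destruct (Rabs_sin_small_near_kPI A t Ht0 Ht1 (Hsmall a b ltac:(lra) Ha Hb ltac:(lra))) as [k Hk].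
    left. apply (ang_close_of_half_sub _ _ k). fold A. lra.
  - assert (Ha : s - 2 * b <= a) by (unfold a; replace A with (u - B) by (unfold A, B; field); apply HAB).
    destruct (Rabs_sin_small_near_kPI B t Ht0 Ht1 (Hsmall b a ltac:(lra) Hb Ha ltac:(lra))) as [k Hk].
    right. apply (ang_close_opp_of_half_add _ _ k). fold B. lra.
Qed.

(* [refl_dir a] is the reflection [x |-> 2 phi_a - x] and [axis_of a] the index [j] with
   [j pi / 3 = phi_a] modulo [pi]. *)
Definition refl_dir (a : dir) : D3 := match a with A1 => Ref0 | A2 => Ref2 | A3 => Ref1 end.
Definition axis_of (a : dir) : nat := match a with A1 => 0 | A2 => 2 | A3 => 1 end.

Lemma axis_of_lt a : (axis_of a < 3)%nat.
Proof. destruct a; simpl; lia. Qed.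

Lemma act_refl_dir a x : exists n : Z, 2 * phi a - x = act (refl_dir a) x + 2 * PI * IZR n.
Proof.
  destruct a; unfold act, phi; simpl;
  first [ exists 0%Z; simpl; lra | exists 1%Z; simpl; lra | exists (-1)%Z; simpl; lra ].
Qed.

Lemma Rabs_sin_sub_phi a x : Rabs (sin (x - phi a)) = axis_dist x (axis_of a).
Proof. unfold axis_dist; destruct a; unfold phi; simpl; sin_shift. Qed.

Lemma flip_involutive a x : flip a (flip a x) = x.
Proof. destruct a, x as [[? ?] ?]; simpl; rewrite negb_involutive; reflexivity. Qed.

Lemma coord_flip a x : coord a (flip a x) = negb (coord a x).
Proof. destruct a, x as [[? ?] ?]; reflexivity. Qed.

Lemma edge_cos_close (theta : site -> R) Gamma :
  (forall (a : dir) (r : site), coord a r = false ->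
     Rabs (Scomp a (theta r) - Scomp a (theta (flip a r))) < Gamma) ->
  forall x a, Rabs (cos (theta x - phi a) - cos (theta (flip a x) - phi a)) < Gamma.
Proof.
  intros H x a. destruct (coord a x) eqn:E; [|exact (H a x E)].
  pose proof (H a (flip a x)) as H'. rewrite coord_flip, E, flip_involutive in H'.
  rewrite Rabs_minus_sym. exact (H' eq_refl).
Qed.

Lemma ang_close_by_refl_dir x y a e :
  ang_close (y - phi a) (- (x - phi a)) e -> ang_close_by y (refl_dir a) x e.
Proof.
  intros H. destruct (act_refl_dir a x) as [n Hn].
  apply (ang_close_shift_r _ (2 * phi a - x) _ _ (- n)); [rewrite Hn, opp_IZR; ring|].
  apply (ang_close_sub_same _ _ (phi a)).
  replace (2 * phi a - x - phi a) with (- (x - phi a)) by ring. exact H.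
Qed.

Lemma ang_close_by_Rot0 x y a e : ang_close (y - phi a) (x - phi a) e -> ang_close_by y Rot0 x e.
Proof. intros H. unfold ang_close_by. rewrite act_Rot0. exact (ang_close_sub_same _ _ _ _ H). Qed.

Section Edges.

Variables (theta : site -> R) (g : R).
Hypothesis g_pos : 0 < g.
Hypothesis edge_close : forall x a,
  Rabs (cos (theta x - phi a) - cos (theta (flip a x) - phi a)) < g * g.

Lemma edge_loose : g <= 1/100 -> forall y a, exists L, (L = Rot0 \/ L = refl_dir a) /\
  ang_close_by (theta (flip a y)) L (theta y) (3/2 * g).
Proof.
  intros Hg y a. destruct (cos_close_loose _ _ g g_pos Hg (edge_close y a)) as [H|H].
  - exists Rot0. split; [now left|]. exact (ang_close_by_Rot0 _ _ _ _ H).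
  - exists (refl_dir a). split; [now right|]. exact (ang_close_by_refl_dir _ _ _ _ H).
Qed.

Lemma edge_tight s y a : 790 * g <= s -> s <= axis_dist (theta y) (axis_of a) ->
  exists L, (L = Rot0 \/ L = refl_dir a) /\
  ang_close_by (theta (flip a y)) L (theta y) (103/100 * (g * g) / s).
Proof.
  intros Hgs Hs. rewrite <- Rabs_sin_sub_phi in Hs.
  destruct (cos_close_tight _ _ g s g_pos Hgs Hs (edge_close y a)) as [H|H].
  - exists Rot0. split; [now left|]. exact (ang_close_by_Rot0 _ _ _ _ H).
  - exists (refl_dir a). split; [now right|]. exact (ang_close_by_refl_dir _ _ _ _ H).
Qed.

Lemma edge_labelling : g <= 1/100 -> exists lbl : site -> dir -> D3, forall y a,
  (lbl y a = Rot0 \/ lbl y a = refl_dir a) /\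
  ang_close_by (theta (flip a y)) (lbl y a) (theta y) (3/2 * g).
Proof.
  intros Hg.
  destruct (functional_choice (fun ya L => (L = Rot0 \/ L = refl_dir (snd ya)) /\
      ang_close_by (theta (flip (snd ya) (fst ya))) L (theta (fst ya)) (3/2 * g))) as [f Hf].
  { intros [y a]. exact (edge_loose Hg y a). }
  exists (fun y a => f (y, a)). intros y a. exact (Hf (y, a)).
Qed.

End Edges.

Definition flip_if (a : dir) (b : bool) (y : site) : site := if b then flip a y else y.

Definition path_label (lbl : site -> dir -> D3) (r x : site) : D3 :=
  let b a := xorb (coord a r) (coord a x) in
  let y3 := flip_if A3 (b A3) r in
  let y2 := flip_if A2 (b A2) y3 in
  d3_mul (if b A1 then lbl y2 A1 else Rot0)
    (d3_mul (if b A2 then lbl y3 A2 else Rot0) (if b A3 then lbl r A3 else Rot0)).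

Lemma path_label_root lbl r : path_label lbl r r = Rot0.
Proof. destruct r as [[[|] [|]] [|]]; reflexivity. Qed.

Lemma ang_close_by_path (theta : site -> R) (lbl : site -> dir -> D3) r e : 0 < e ->
  (forall y a, ang_close_by (theta (flip a y)) (lbl y a) (theta y) e) ->
  forall x, ang_close_by (theta x) (path_label lbl r x) (theta r) (3 * e).
Proof.
  intros He H x.
  assert (Hstep : forall a b y,
    ang_close_by (theta (flip_if a b y)) (if b then lbl y a else Rot0) (theta y) e).
  { intros a [|] y; [apply H|exact (ang_close_by_refl _ _ He)]. }
  unfold path_label.
  set (b a := xorb (coord a r) (coord a x)).
  assert (Hx : x = flip_if A1 (b A1) (flip_if A2 (b A2) (flip_if A3 (b A3) r))).
  { unfold b. destruct r as [[[|] [|]] [|]], x as [[[|] [|]] [|]]; reflexivity. }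
  rewrite Hx at 1. replace (3 * e) with (e + (e + e)) by ring.
  eapply ang_close_by_trans; [apply Hstep|]. eapply ang_close_by_trans; apply Hstep.
Qed.

(** * Finite combinatorics of labellings *)

(* [in_stab K] is the indicator of [{Rot0}] for [K = None] and of [{Rot0, Ref b}] for
   [K = Some b]: the elements that may approximately fix a spin far from all axes, resp. near the
   axis [b pi / 3]. *)
Definition in_stab (K : option nat) (g : D3) : bool :=
  match K with
  | None => d3_eqb g Rot0
  | Some b => d3_eqb g Rot0 || d3_eqb g (d3 true b)
  end.

Definition stab_index_ok (K : option nat) : Prop :=
  match K with Some b => (b < 3)%nat | None => True end.

Definition in_coset (K : option nat) (p v : D3) : bool := in_stab K (d3_mul (d3_inv p) v).

Definition edge_ok (K : option nat) (a : dir) (v w : D3) : bool :=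
  in_coset K v w || in_coset K (d3_mul (refl_dir a) v) w.

Definition axis_ne (K : option nat) (a : dir) : bool :=
  match K with Some b => negb (Nat.eqb b (axis_of a)) | None => true end.

Definition dir_eqb (a a' : dir) : bool :=
  match a, a' with A1, A1 | A2, A2 | A3, A3 => true | _, _ => false end.

(* The labelling of alternative (2) of the theorem for [P = Some a] and of (1) for [P = None]. *)
Definition pattern (P : option dir) (r x : site) : D3 :=
  match P with
  | Some a => if Bool.eqb (coord a x) (coord a r) then Rot0 else refl_dir a
  | None => Rot0
  end.

Definition edge_label (P : option dir) (a : dir) : D3 :=
  match P with Some a' => if dir_eqb a' a then refl_dir a else Rot0 | None => Rot0 end.

Lemma path_label_edge_label P r x : path_label (fun _ => edge_label P) r x = pattern P r x.
Proof. destruct P as [[| |]|], r as [[[|] [|]] [|]], x as [[[|] [|]] [|]]; reflexivity. Qed.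

Definition all_D3 (f : D3 -> bool) : bool := forallb f [Rot0; Rot1; Rot2; Ref0; Ref1; Ref2].
Definition all_stab (f : option nat -> bool) : bool := forallb f [None; Some 0; Some 1; Some 2]%nat.

(* The sites in the order of a Hamiltonian path of the cube. *)
Definition s0 : site := (false, false, false).
Definition s1 : site := (true, false, false).
Definition s2 : site := (true, true, false).
Definition s3 : site := (false, true, false).
Definition s4 : site := (false, true, true).
Definition s5 : site := (true, true, true).
Definition s6 : site := (true, false, true).
Definition s7 : site := (false, false, true).

Definition all_site (f : site -> bool) : bool := forallb f [s0; s1; s2; s3; s4; s5; s6; s7].

Lemma all_D3_spec f : all_D3 f = true -> forall v, f v = true.
Proof. unfold all_D3. rewrite forallb_forall. intros H v. apply H. destruct v; simpl; tauto. Qed.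

Lemma all_stab_spec f : all_stab f = true -> forall K, stab_index_ok K -> f K = true.
Proof.
  unfold all_stab. rewrite forallb_forall. intros H K HK. apply H.
  destruct K as [[|[|[|]]]|]; simpl in *; try tauto; lia.
Qed.

Lemma all_site_spec f : all_site f = true -> forall x, f x = true.
Proof.
  unfold all_site. rewrite forallb_forall. intros H x. apply H.
  destruct x as [[[|] [|]] [|]]; simpl; tauto.
Qed.

Definition site_eqb (x y : site) : bool :=
  match x, y with
  | (x1, x2, x3), (y1, y2, y3) => Bool.eqb x1 y1 && Bool.eqb x2 y2 && Bool.eqb x3 y3
  end.

Lemma site_eqb_eq x y : site_eqb x y = true -> x = y.
Proof. destruct x as [[[|] [|]] [|]], y as [[[|] [|]] [|]]; simpl; congruence. Qed.

Definition edge_ok2 K a v w : bool := edge_ok K a v w && edge_ok K a w v.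

(* Unlike [implb], this does not evaluate [X] when [c] is false, which prunes the search below. *)
Notation lazy_implb c X := (if c then X else true).

Lemma lazy_implb_elim (c X : bool) : lazy_implb c X = true -> c = true -> X = true.
Proof. intros H ->. exact H. Qed.

Definition classified K r v0 v1 v2 v3 v4 v5 v6 v7 : bool :=
  forallb (in_stab K) [v0; v1; v2; v3; v4; v5; v6; v7]
  || existsb (fun a => axis_ne K a &&
       forallb (fun xv => in_coset K (pattern (Some a) r (fst xv)) (snd xv))
         [(s0, v0); (s1, v1); (s2, v2); (s3, v3); (s4, v4); (s5, v5); (s6, v6); (s7, v7)])
     [A1; A2; A3].

(* Backtracking search: [v_i] is the candidate label of [s_i], checked against [r] and against
   its neighbours among [s_0, ..., s_(i-1)]. *)
Definition classify_check (r : site) (K : option nat) : bool :=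
  let root s v := if site_eqb r s then in_stab K v else true in
  all_D3 (fun v0 => lazy_implb (root s0 v0) (
  all_D3 (fun v1 => lazy_implb (root s1 v1 && edge_ok2 K A1 v0 v1) (
  all_D3 (fun v2 => lazy_implb (root s2 v2 && edge_ok2 K A2 v1 v2) (
  all_D3 (fun v3 => lazy_implb (root s3 v3 && edge_ok2 K A1 v2 v3 && edge_ok2 K A2 v0 v3) (
  all_D3 (fun v4 => lazy_implb (root s4 v4 && edge_ok2 K A3 v3 v4) (
  all_D3 (fun v5 => lazy_implb (root s5 v5 && edge_ok2 K A1 v4 v5 && edge_ok2 K A3 v2 v5) (
  all_D3 (fun v6 => lazy_implb (root s6 v6 && edge_ok2 K A2 v5 v6 && edge_ok2 K A3 v1 v6) (
  all_D3 (fun v7 => lazy_implb (root s7 v7 && edge_ok2 K A1 v6 v7 && edge_ok2 K A3 v0 v7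
                                 && edge_ok2 K A2 v4 v7) (
    classified K r v0 v1 v2 v3 v4 v5 v6 v7)))))))))))))))).

Lemma classify_check_true : all_site (fun r => all_stab (classify_check r)) = true.
Proof. vm_compute. reflexivity. Qed.

Local Ltac descend_label C Hroot Hedge v :=
  let C' := fresh in
  pose proof (lazy_implb_elim _ _ (all_D3_spec _ C v)) as C'; cbv beta in C';
  lapply C';
  [clear C C'; intro C
  | clear C'; rewrite ?andb_true_iff; repeat split; first [exact (Hroot _) | exact (Hedge _ _)]].

Lemma labelling_classify r K (h : site -> D3) : stab_index_ok K ->
  in_stab K (h r) = true ->
  (forall x a, edge_ok K a (h x) (h (flip a x)) = true) ->
  (forall x, in_stab K (h x) = true) \/
  exists a, axis_ne K a = true /\
    forall x, in_coset K (pattern (Some a) r x) (h x) = true.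
Proof.
  intros HK Hr Hok.
  assert (Hedge : forall x a, edge_ok2 K a (h x) (h (flip a x)) = true).
  { intros x a. unfold edge_ok2. rewrite Hok.
    pose proof (Hok (flip a x) a) as H. rewrite flip_involutive in H. now rewrite H. }
  assert (Hroot : forall s, (if site_eqb r s then in_stab K (h s) else true) = true).
  { intros s. destruct (site_eqb r s) eqn:Es; [|reflexivity]. now rewrite <- (site_eqb_eq _ _ Es). }
  pose proof (all_stab_spec _ (all_site_spec _ classify_check_true r) K HK) as C.
  unfold classify_check in C. cbv beta zeta in C.
  descend_label C Hroot Hedge (h s0). descend_label C Hroot Hedge (h s1). descend_label C Hroot Hedge (h s2). descend_label C Hroot Hedge (h s3).
  descend_label C Hroot Hedge (h s4). descend_label C Hroot Hedge (h s5). descend_label C Hroot Hedge (h s6). descend_label C Hroot Hedge (h s7).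
  unfold classified in C. cbn [forallb existsb fst snd] in C.
  apply orb_true_iff in C as [C|C].
  - left. rewrite !andb_true_iff in C. intros [[[|] [|]] [|]]; tauto.
  - right. rewrite !orb_true_iff, !andb_true_iff in C.
    destruct C as [C|[C|[C|C]]]; [exists A1|exists A2|exists A3|discriminate];
      (split; [tauto|intros [[[|] [|]] [|]]; tauto]).
Qed.

Lemma pattern_flip P r x a : pattern P r (flip a x) = d3_mul (edge_label P a) (pattern P r x).
Proof.
  destruct P as [[| |]|], r as [[[|] [|]] [|]], x as [[[|] [|]] [|]], a; reflexivity.
Qed.

Lemma d3_mul_cancel_r g h k : d3_mul g k = d3_mul h k -> g = h.
Proof. destruct g, h, k; cbv; congruence. Qed.

Lemma in_coset_None p v : in_coset None p v = true -> v = p.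
Proof. intros H. apply d3_invg_mul_eq1, d3_eqb_eq, H. Qed.

Lemma edge_label_of_pattern P r x a L :
  in_coset None (d3_mul L (pattern P r x)) (pattern P r (flip a x)) = true -> L = edge_label P a.
Proof.
  rewrite pattern_flip. intros H. apply in_coset_None in H.
  symmetry. exact (d3_mul_cancel_r _ _ _ H).
Qed.

(* With [theta r] near the axis [b pi / 3] and [theta x] close to the image of [theta r] by [v],
   [theta x] is far from the axis of direction [a]. *)
Definition off_axis (b : nat) (v : D3) (a : dir) : bool := negb (Nat.eqb (axis_perm v (axis_of a)) b).

Lemma pattern_cases a r x : pattern (Some a) r x = Rot0 \/ pattern (Some a) r x = refl_dir a.
Proof. simpl. destruct Bool.eqb; auto. Qed.

Lemma edge_label_of_coset b a d p L v w : (b < 3)%nat -> axis_ne (Some b) a = true ->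
  (p = Rot0 \/ p = refl_dir a) -> in_coset (Some b) p v = true -> off_axis b v d = true ->
  in_coset (Some b) (d3_mul (edge_label (Some a) d) p) w = true ->
  (L = Rot0 \/ L = refl_dir d) -> in_coset (Some b) (d3_mul L v) w = true ->
  L = edge_label (Some a) d.
Proof.
  intros Hb Ha Hp Hv Hoff Hw HL Hs.
  destruct b as [|[|[|b]]]; [| | |lia]; destruct a; cbv in Ha; try discriminate Ha;
  destruct Hp as [->| ->]; destruct v; cbv in Hv; try discriminate Hv;
  destruct d; cbv in Hoff; try discriminate Hoff;
  destruct w; cbv in Hw; try discriminate Hw;
  destruct HL as [->| ->]; cbv in Hs; try discriminate Hs; reflexivity.
Qed.

Lemma detour_off_axis b a d p v v1 v2 : (b < 3)%nat -> axis_ne (Some b) a = true ->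
  (p = Rot0 \/ p = refl_dir a) -> in_coset (Some b) p v = true -> off_axis b v d = false ->
  in_coset (Some b) (d3_mul (edge_label (Some a) a) p) v1 = true ->
  in_coset (Some b) (d3_mul (edge_label (Some a) d) (d3_mul (edge_label (Some a) a) p)) v2 = true ->
  dir_eqb a d = false /\ off_axis b v a = true /\ off_axis b v1 d = true /\ off_axis b v2 a = true.
Proof.
  intros Hb Ha Hp Hv Hoff H1 H2.
  destruct b as [|[|[|b]]]; [| | |lia]; destruct a; cbv in Ha; try discriminate Ha;
  destruct Hp as [->| ->]; destruct v; cbv in Hv; try discriminate Hv;
  destruct d; cbv in Hoff; try discriminate Hoff;
  destruct v1; cbv in H1; try discriminate H1;
  destruct v2; cbv in H2; try discriminate H2; auto.
Qed.

Lemma act_Ref x j : (j < 3)%nat -> act (d3 true j) x = - x + INR j * (2 * PI / 3).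
Proof. intros Hj. destruct j as [|[|[|]]]; try lia; reflexivity. Qed.

(* The axes [j pi / 3 mod pi] are exactly the directions of the [w_tau]. *)
Lemma near_w_angle x j t : (j < 3)%nat -> 0 < t -> t <= 1/10 -> axis_dist x j < t ->
  exists tau, (1 <= tau <= 6)%nat /\ ang_close x (w_angle tau) (102/100 * t) /\
    ang_close (act (d3 true j) x) (w_angle tau) (102/100 * t).
Proof.
  intros Hj Ht0 Ht1 HN.
  destruct (Rabs_sin_small_near_kPI (x - INR j * PI / 3) t Ht0 Ht1 HN) as [k Hk].
  set (n := (Z.of_nat j + 3 * k)%Z).
  assert (Hn : IZR n = INR j + 3 * IZR k)
    by (unfold n; rewrite plus_IZR, mult_IZR, <- INR_IZR_INZ; simpl; ring).
  assert (Hex : exists tau q, (1 <= tau <= 6)%nat /\ INR tau = IZR n - 6 * IZR q).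
  { pose proof (Z.div_mod n 6 ltac:(lia)) as Hdm. pose proof (Z.mod_pos_bound n 6 ltac:(lia)).
    assert (Hnqm : IZR n = 6 * IZR (n / 6) + IZR (n mod 6))
      by (rewrite Hdm at 1; rewrite plus_IZR, mult_IZR; reflexivity).
    destruct (Z.eq_dec (n mod 6) 0) as [Hm0|Hm0].
    - exists 6%nat, (n / 6 - 1)%Z. split; [lia|]. rewrite minus_IZR, Hnqm, Hm0. simpl. ring.
    - exists (Z.to_nat (n mod 6)), (n / 6)%Z. split; [lia|].
      rewrite INR_IZR_INZ, Z2Nat.id by lia. rewrite Hnqm. ring. }
  destruct Hex as [tau [q [Htau Ht]]].
  exists tau. split; [exact Htau|]. unfold w_angle. split.
  - exists q. replace (x - PI * INR tau / 3 - 2 * PI * IZR q) with (x - INR j * PI / 3 - IZR k * PI)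
      by (rewrite Ht, Hn; field). lra.
  - exists (q - k)%Z. rewrite act_Ref, minus_IZR by exact Hj.
    replace (- x + INR j * (2 * PI / 3) - PI * INR tau / 3 - 2 * PI * (IZR q - IZR k))
      with (- (x - INR j * PI / 3 - IZR k * PI)) by (rewrite Ht, Hn; field).
    rewrite Rabs_Ropp. lra.
Qed.

Lemma Rabs_sin_add_PI3_ge y : 865/1000 - 2 * Rabs (sin y) <= Rabs (sin (y + PI / 3)).
Proof.
  rewrite sin_plus, sin_PI3, cos_PI3.
  assert (H3 : 173/100 <= sqrt 3 <= 2).
  { split; [rewrite <- (sqrt_pow2 (173/100)) by lra|rewrite <- (sqrt_pow2 2) by lra];
      apply sqrt_le_1_alt; simpl; lra. }
  pose proof (Rabs_cos_ge y). pose proof (Rabs_pos (sin y)). pose proof (Rabs_le_1 _ (SIN_bound y)).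
  pose proof (Rabs_triang_inv (cos y * (sqrt 3 / 2)) (- (sin y * (1 / 2)))) as Htr.
  replace (cos y * (sqrt 3 / 2) - - (sin y * (1 / 2))) with (sin y * (1 / 2) + cos y * (sqrt 3 / 2))
    in Htr by ring.
  rewrite Rabs_Ropp, !Rabs_mult, (Rabs_right (sqrt 3 / 2)), (Rabs_right (1 / 2)) in Htr by lra.
  assert (Rabs (cos y) * (sqrt 3 / 2) >= (1 - Rabs (sin y)) * (173/200)) by nra.
  lra.
Qed.

Lemma Rabs_sin_sub_PI3_ge y : 865/1000 - 2 * Rabs (sin y) <= Rabs (sin (y - PI / 3)).
Proof.
  rewrite <- (Rabs_Ropp (sin (y - PI / 3))), <- sin_neg.
  replace (- (y - PI / 3)) with (- y + PI / 3) by ring.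
  rewrite <- (Rabs_Ropp (sin y)), <- sin_neg. apply Rabs_sin_add_PI3_ge.
Qed.

Lemma axis_dist_other x b j : (b < 3)%nat -> (j < 3)%nat -> j <> b ->
  axis_dist x b < 1/100 -> 84/100 <= axis_dist x j.
Proof.
  intros Hb Hj Hjb HN. unfold axis_dist in *.
  set (y := x - INR b * PI / 3) in *.
  pose proof (Rabs_sin_add_PI3_ge y). pose proof (Rabs_sin_sub_PI3_ge y).
  destruct b as [|[|[|]]]; destruct j as [|[|[|]]]; try lia; simpl in y |- *.
  - rewrite (Rabs_sin_eq_shift _ (y - PI / 3) 0) by (unfold y; simpl; lra). lra.
  - rewrite (Rabs_sin_eq_shift _ (y + PI / 3) (-1)) by (unfold y; simpl; lra). lra.
  - rewrite (Rabs_sin_eq_shift _ (y + PI / 3) 0) by (unfold y; simpl; lra). lra.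
  - rewrite (Rabs_sin_eq_shift _ (y - PI / 3) 0) by (unfold y; simpl; lra). lra.
  - rewrite (Rabs_sin_eq_shift _ (y - PI / 3) 1) by (unfold y; simpl; lra). lra.
  - rewrite (Rabs_sin_eq_shift _ (y + PI / 3) 0) by (unfold y; simpl; lra). lra.
Qed.

Lemma in_stab_of_fixed K x g e : stab_index_ok K ->
  (forall j, (j < 3)%nat -> K <> Some j -> e / 2 <= axis_dist x j) -> e <= 1 ->
  ang_close (act g x) x e -> in_stab K g = true.
Proof.
  intros HK Hfar He H. destruct (act_fixed_classify g x e H He) as [->|[Hg Hd]].
  - destruct K; reflexivity.
  - destruct K as [b|].
    + destruct (Nat.eq_dec (shift g) b) as [<-|Hne].
      * destruct g; try discriminate Hg; reflexivity.
      * pose proof (Hfar _ (shift_lt g) ltac:(congruence)). lra.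
    + pose proof (Hfar _ (shift_lt g) ltac:(discriminate)). lra.
Qed.

Lemma axis_dist_transport x y v e j : (j < 3)%nat -> ang_close_by x v y e ->
  axis_dist y (axis_perm v j) - e <= axis_dist x j.
Proof.
  intros Hj H. rewrite <- axis_dist_act by exact Hj.
  pose proof (axis_dist_Lipschitz _ _ j e (ang_close_sym _ _ _ H)). lra.
Qed.

(** * The configuration around a site *)

Section Configuration.

Variables (kappa g : R) (theta : site -> R) (r : site).
Hypothesis g_pos : 0 < g.
Hypothesis kappa_small : kappa <= 1/1000.
Hypothesis g_small : g <= kappa / 1000.
Hypothesis edge_close : forall x a,
  Rabs (cos (theta x - phi a) - cos (theta (flip a x) - phi a)) < g * g.

Section Stabilizer.

Variable K : option nat.
Hypothesis K_ok : stab_index_ok K.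
Hypothesis stab_fixed : forall v e, e <= 21/2 * g ->
  ang_close (act v (theta r)) (theta r) e -> in_stab K v = true.

Lemma stab_of_labels x y v w L e :
  ang_close_by (theta x) v (theta r) (9/2 * g) -> ang_close_by (theta y) w (theta r) (9/2 * g) ->
  ang_close_by (theta y) L (theta x) e -> e <= 3/2 * g ->
  in_coset K (d3_mul L v) w = true.
Proof.
  intros Hx Hy Hxy He. apply (stab_fixed _ (9/2 * g + (e + 9/2 * g))); [lra|].
  apply ang_close_act_cancel, (ang_close_trans _ (theta y)); [exact (ang_close_sym _ _ _ Hy)|].
  exact (ang_close_by_trans _ _ _ _ _ _ _ Hxy Hx).
Qed.

Lemma loose_classification : exists h : site -> D3,
  (forall x, ang_close_by (theta x) (h x) (theta r) (9/2 * g)) /\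
  ((forall x, in_stab K (h x) = true) \/
   exists a, axis_ne K a = true /\
     forall x, in_coset K (pattern (Some a) r x) (h x) = true).
Proof.
  destruct (edge_labelling theta g g_pos edge_close ltac:(lra)) as [lbl Hlbl].
  assert (Hh : forall x, ang_close_by (theta x) (path_label lbl r x) (theta r) (9/2 * g)).
  { intros x. apply (ang_close_by_weaken _ _ _ (3 * (3/2 * g))); [lra|].
    apply ang_close_by_path; [lra|]. intros y a. exact (proj2 (Hlbl y a)). }
  exists (path_label lbl r). split; [exact Hh|].
  apply labelling_classify; [exact K_ok|rewrite path_label_root; destruct K; reflexivity|].
  intros x a. destruct (Hlbl x a) as [[HL|HL] Hxa]; apply orb_true_intro; rewrite HL in Hxa.
  - left. rewrite <- (d3_mul1g (path_label lbl r x)) at 1.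
    exact (stab_of_labels _ _ _ _ _ _ (Hh x) (Hh (flip a x)) Hxa (Rle_refl _)).
  - right. exact (stab_of_labels _ _ _ _ _ _ (Hh x) (Hh (flip a x)) Hxa (Rle_refl _)).
Qed.

Lemma tight_edge h x a s :
  (forall y, ang_close_by (theta y) (h y) (theta r) (9/2 * g)) ->
  790 * g <= s -> s <= axis_dist (theta x) (axis_of a) -> 103/100 * (g * g) / s <= 3/2 * g ->
  exists L, (L = Rot0 \/ L = refl_dir a) /\
    ang_close_by (theta (flip a x)) L (theta x) (103/100 * (g * g) / s) /\
    in_coset K (d3_mul L (h x)) (h (flip a x)) = true.
Proof.
  intros Hh Hs Hsx HE.
  destruct (edge_tight theta g g_pos edge_close s x a Hs Hsx) as [L [HL HLx]].
  exists L. repeat split; [exact HL|exact HLx|].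
  exact (stab_of_labels _ _ _ _ _ _ (Hh x) (Hh (flip a x)) HLx HE).
Qed.

End Stabilizer.

Lemma pattern_of_edge_labels P e : 0 < e -> 3 * e * kappa <= 4 * (g * g) ->
  (forall y a, ang_close_by (theta (flip a y)) (edge_label P a) (theta y) e) ->
  forall x, ang_close_by (theta x) (pattern P r x) (theta r) (4 * (g * g) / kappa).
Proof.
  intros He HeT Hedge x. rewrite <- path_label_edge_label.
  apply (ang_close_by_weaken _ _ _ (3 * e)); [|exact (ang_close_by_path _ _ r e He Hedge x)].
  apply (Rmult_le_reg_r kappa); [lra|].
  replace (4 * (g * g) / kappa * kappa) with (4 * (g * g)) by (field; lra). lra.
Qed.

Lemma pattern_far_from_axes : (forall j, (j < 3)%nat -> 8/10 * kappa <= axis_dist (theta r) j) ->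
  exists P, forall x, ang_close_by (theta x) (pattern P r x) (theta r) (4 * (g * g) / kappa).
Proof.
  intros Hfar.
  assert (Hstab : forall v e, e <= 21/2 * g -> ang_close (act v (theta r)) (theta r) e ->
                    in_stab None v = true).
  { intros v e He. apply in_stab_of_fixed; [exact I| |lra]. intros j Hj _. specialize (Hfar j Hj). lra. }
  destruct (loose_classification None I Hstab) as [h [Hh Hcl]].
  assert (HP : exists P, forall x, h x = pattern P r x).
  { destruct Hcl as [Hall|[a [_ Ha]]].
    - exists None. intros x. exact (proj1 (d3_eqb_eq _ _) (Hall x)).
    - exists (Some a). intros x. exact (in_coset_None _ _ (Ha x)). }
  destruct HP as [P HP].
  set (E := 103/100 * (g * g) / (79/100 * kappa)).
  assert (HEk : E * kappa = 103/79 * (g * g)) by (unfold E; field; lra).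
  assert (HE0 : 0 < E) by nra.
  assert (HEg : E <= 3/2 * g) by nra.
  assert (Hedge : forall y a, ang_close_by (theta (flip a y)) (edge_label P a) (theta y) E).
  { intros y a.
    assert (Hy : 79/100 * kappa <= axis_dist (theta y) (axis_of a)).
    { pose proof (axis_dist_transport _ _ _ _ _ (axis_of_lt a) (Hh y)).
      pose proof (Hfar _ (axis_perm_lt (h y) (axis_of a))). lra. }
    destruct (tight_edge None Hstab h y a (79/100 * kappa) Hh ltac:(lra) Hy HEg) as [L [_ [HL Hs]]].
    rewrite !HP in Hs. apply edge_label_of_pattern in Hs. rewrite <- Hs. exact HL. }
  exists P. apply (pattern_of_edge_labels P E HE0); [nra|exact Hedge].
Qed.

Lemma all_near_w_of_stab_labels b h : (b < 3)%nat -> axis_dist (theta r) b < 8/10 * kappa ->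
  (forall x, ang_close_by (theta x) (h x) (theta r) (9/2 * g)) ->
  (forall x, in_stab (Some b) (h x) = true) ->
  exists tau : nat, (1 <= tau <= 6)%nat /\ forall x : site, ang_close (theta x) (w_angle tau) kappa.
Proof.
  intros Hb Hnear Hh Hall.
  destruct (near_w_angle (theta r) b (8/10 * kappa) Hb ltac:(lra) ltac:(lra) Hnear)
    as [tau [Htau [Hw1 Hw2]]].
  exists tau. split; [exact Htau|]. intros x. pose proof (Hh x) as Hx. unfold ang_close_by in Hx.
  specialize (Hall x). simpl in Hall. apply orb_prop in Hall as [E|E]; apply d3_eqb_eq in E;
    rewrite E in Hx; [rewrite act_Rot0 in Hx; pose proof (ang_close_trans _ _ _ _ _ Hx Hw1) as Hc
                     |pose proof (ang_close_trans _ _ _ _ _ Hx Hw2) as Hc];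
    (eapply ang_close_weaken; [|exact Hc]; lra).
Qed.

(* An edge whose spins may be near its axis is bypassed by three off-axis edges through
   [flip a y]. *)
Lemma edge_labels_by_detour b a h e : (b < 3)%nat -> axis_ne (Some b) a = true ->
  (forall x, in_coset (Some b) (pattern (Some a) r x) (h x) = true) -> 0 <= e ->
  (forall x d, off_axis b (h x) d = true ->
     ang_close_by (theta (flip d x)) (edge_label (Some a) d) (theta x) e) ->
  forall y d, ang_close_by (theta (flip d y)) (edge_label (Some a) d) (theta y) (3 * e).
Proof.
  intros Hb Ha Hcos He Hoff y d. destruct (off_axis b (h y) d) eqn:Ht.
  { apply (ang_close_by_weaken _ _ _ e); [lra|]. exact (Hoff y d Ht). }
  destruct (detour_off_axis b a d (pattern (Some a) r y) (h y) (h (flip a y))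
    (h (flip d (flip a y))) Hb Ha (pattern_cases a r y) (Hcos y) Ht
    ltac:(rewrite <- pattern_flip; exact (Hcos _))
    ltac:(rewrite <- !pattern_flip; exact (Hcos _))) as [Had [T1 [T2 T3]]].
  pose proof (ang_close_by_trans _ _ _ _ _ _ _ (Hoff _ _ T3)
    (ang_close_by_trans _ _ _ _ _ _ _ (Hoff _ _ T2) (Hoff _ _ T1))) as Hpath.
  replace (flip a (flip d (flip a y))) with (flip d y) in Hpath
    by (destruct a, d, y as [[[|] [|]] [|]]; reflexivity).
  replace (d3_mul (edge_label (Some a) a) (d3_mul (edge_label (Some a) d) (edge_label (Some a) a)))
    with (edge_label (Some a) d) in Hpath by (destruct a, d; try discriminate Had; reflexivity).
  apply (ang_close_by_weaken _ _ _ (e + (e + e))); [lra|exact Hpath].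
Qed.

Lemma pattern_near_axis b : (b < 3)%nat -> axis_dist (theta r) b < 8/10 * kappa ->
  ~ (exists tau : nat, (1 <= tau <= 6)%nat /\
       forall x : site, ang_close (theta x) (w_angle tau) kappa) ->
  exists a, forall x, ang_close_by (theta x) (pattern (Some a) r x) (theta r) (4 * (g * g) / kappa).
Proof.
  intros Hb Hnear Hnot.
  assert (Hother : forall j, (j < 3)%nat -> j <> b -> 84/100 <= axis_dist (theta r) j)
    by (intros j Hj Hjb; apply (axis_dist_other _ b); auto; lra).
  assert (Hstab : forall v e, e <= 21/2 * g -> ang_close (act v (theta r)) (theta r) e ->
                    in_stab (Some b) v = true).
  { intros v e He. apply in_stab_of_fixed; [exact Hb| |lra].
    intros j Hj Hjb. assert (Hne : j <> b) by congruence. specialize (Hother j Hj Hne). lra. }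
  destruct (loose_classification (Some b) Hb Hstab) as [h [Hh [Hall|[a [Ha Hcos]]]]].
  { exfalso. exact (Hnot (all_near_w_of_stab_labels b h Hb Hnear Hh Hall)). }
  set (E := 103/100 * (g * g) / (8/10)).
  assert (HE : E = 103/80 * (g * g)) by (unfold E; field).
  assert (HEg : E <= 3/2 * g) by nra.
  assert (Hoff : forall x d, off_axis b (h x) d = true ->
            ang_close_by (theta (flip d x)) (edge_label (Some a) d) (theta x) E).
  { intros x d Ht.
    assert (Hx : 8/10 <= axis_dist (theta x) (axis_of d)).
    { pose proof (axis_dist_transport _ _ _ _ _ (axis_of_lt d) (Hh x)).
      unfold off_axis in Ht. apply negb_true_iff, Nat.eqb_neq in Ht.
      pose proof (Hother _ (axis_perm_lt _ _) Ht). lra. }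
    destruct (tight_edge (Some b) Hstab h x d (8/10) Hh ltac:(lra) Hx HEg) as [L [HL [HLx Hs]]].
    rewrite <- (edge_label_of_coset b a d (pattern (Some a) r x) L (h x) (h (flip d x)) Hb Ha
      (pattern_cases a r x) (Hcos x) Ht ltac:(rewrite <- pattern_flip; exact (Hcos _)) HL Hs).
    exact HLx. }
  exists a. apply (pattern_of_edge_labels _ (3 * E)); [nra|nra|].
  exact (edge_labels_by_detour b a h E Hb Ha Hcos ltac:(nra) Hoff).
Qed.

Lemma pattern_exists :
  ~ (exists tau : nat, (1 <= tau <= 6)%nat /\
       forall x : site, ang_close (theta x) (w_angle tau) kappa) ->
  exists P, forall x, ang_close_by (theta x) (pattern P r x) (theta r) (4 * (g * g) / kappa).
Proof.
  intros Hnot.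
  destruct (Rlt_dec (axis_dist (theta r) 0) (8/10 * kappa)) as [H0|H0];
    [destruct (pattern_near_axis 0 ltac:(lia) H0 Hnot) as [a Ha]; now exists (Some a)|].
  destruct (Rlt_dec (axis_dist (theta r) 1) (8/10 * kappa)) as [H1|H1];
    [destruct (pattern_near_axis 1 ltac:(lia) H1 Hnot) as [a Ha]; now exists (Some a)|].
  destruct (Rlt_dec (axis_dist (theta r) 2) (8/10 * kappa)) as [H2|H2];
    [destruct (pattern_near_axis 2 ltac:(lia) H2 Hnot) as [a Ha]; now exists (Some a)|].
  apply pattern_far_from_axes. intros j Hj. destruct j as [|[|[|]]]; lra || lia.
Qed.

End Configuration.

Lemma alternatives_of_pattern (theta : site -> R) r T P :
  (forall x, ang_close_by (theta x) (pattern P r x) (theta r) T) ->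
  (forall r', ang_close (theta r') (theta r) T) \/
  exists a, (forall r', coord a r' = coord a r -> ang_close (theta r') (theta r) T) /\
            (forall r', coord a r' <> coord a r -> ang_close (theta r') (2 * phi a - theta r) T).
Proof.
  unfold ang_close_by. intros H. destruct P as [a|].
  - right. exists a. split; intros r' Hc; specialize (H r'); simpl in H.
    + rewrite Hc, eqb_reflx, act_Rot0 in H. exact H.
    + replace (Bool.eqb (coord a r') (coord a r)) with false in H
        by (destruct (coord a r'), (coord a r); simpl; congruence).
      destruct (act_refl_dir a (theta r)) as [n Hn].
      exact (ang_close_shift_r _ _ _ _ n Hn H).
  - left. intros r'. specialize (H r'). simpl in H. rewrite act_Rot0 in H. exact H.
Qed.

Lemma alternatives_exclusive (theta : site -> R) r kappa T : 0 < T -> 3 * T < kappa -> T <= 1/20 ->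
  ~ (exists tau : nat, (1 <= tau <= 6)%nat /\ forall x, ang_close (theta x) (w_angle tau) kappa) ->
  (forall r', ang_close (theta r') (theta r) T) ->
  (exists a, (forall r', coord a r' = coord a r -> ang_close (theta r') (theta r) T) /\
     (forall r', coord a r' <> coord a r -> ang_close (theta r') (2 * phi a - theta r) T)) ->
  False.
Proof.
  intros HT0 HTk HT1 Hnot H1 [a [_ H2]].
  assert (Hc : coord a (flip a r) <> coord a r) by (rewrite coord_flip; destruct (coord a r); discriminate).
  pose proof (ang_close_trans _ _ _ _ _ (ang_close_sym _ _ _ (H2 _ Hc)) (H1 (flip a r))) as H3.
  destruct (act_refl_dir a (theta r)) as [n Hn].
  assert (H4 : ang_close (act (refl_dir a) (theta r)) (theta r) (T + T)).
  { apply (ang_close_shift_l (2 * phi a - theta r) _ _ _ (- n)); [rewrite Hn, opp_IZR; ring|exact H3]. }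
  destruct (act_fixed_classify _ _ _ H4 ltac:(lra)) as [E|[_ HN]]; [destruct a; discriminate|].
  destruct (near_w_angle (theta r) (shift (refl_dir a)) T (shift_lt _) HT0 ltac:(lra) ltac:(lra))
    as [tau [Htau [Hw _]]].
  apply Hnot. exists tau. split; [exact Htau|]. intros r'.
  eapply ang_close_weaken; [|exact (ang_close_trans _ _ _ _ _ (H1 r') Hw)]. lra.
Qed.

Theorem proposition6p5 :
  exists c0 : R, 0 < c0 /\
  forall kappa Gamma : R,
    0 < kappa -> 0 < Gamma ->
    kappa <= c0 -> sqrt Gamma <= c0 * kappa ->
    forall theta : site -> R,
      (forall (a : dir) (r : site), coord a r = false ->
         Rabs (Scomp a (theta r) - Scomp a (theta (flip a r))) < Gamma) ->
      ~ (exists tau : nat, (1 <= tau <= 6)%nat /\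
           forall r : site, ang_close (theta r) (w_angle tau) kappa) ->
      forall r : site,
        let alt1 := forall r' : site,
            ang_close (theta r') (theta r) (4 * Gamma / kappa) in
        let alt2 := exists a : dir,
            (forall r' : site, coord a r' = coord a r ->
               ang_close (theta r') (theta r) (4 * Gamma / kappa)) /\
            (forall r' : site, coord a r' <> coord a r ->
               ang_close (theta r') (2 * phi a - theta r) (4 * Gamma / kappa)) in
        (alt1 /\ ~ alt2) \/ (~ alt1 /\ alt2).
Proof.
  exists (1/1000). split; [lra|].
  intros kappa Gamma Hk HG Hkc Hsq theta Hedge Hnot r alt1 alt2.
  set (g := sqrt Gamma) in Hsq.
  assert (HgG : Gamma = g * g) by (unfold g; rewrite sqrt_sqrt; lra).
  assert (Hg : 0 < g) by (apply sqrt_lt_R0; lra).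
  pose proof (edge_cos_close theta Gamma Hedge) as HC. rewrite HgG in HC.
  destruct (pattern_exists kappa g theta r Hg Hkc ltac:(lra) HC Hnot) as [P HP].
  rewrite <- HgG in HP.
  assert (HgK : 0 < g / kappa <= 1/1000).
  { split; [apply Rdiv_lt_0_compat; lra|]. apply (Rmult_le_reg_r kappa); [lra|].
    replace (g / kappa * kappa) with g by (field; lra). lra. }
  assert (HT : 4 * Gamma / kappa = 4 * g * (g / kappa)) by (rewrite HgG; field; lra).
  pose proof (alternatives_exclusive theta r kappa (4 * Gamma / kappa)
    ltac:(nra) ltac:(nra) ltac:(nra) Hnot) as Hexcl.
  destruct (alternatives_of_pattern theta r _ P HP); unfold alt1, alt2; tauto.
Qed.
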